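(* Let $\Gamma$ be a pre-automatic structure with generators $A$ and language of representatives $L$. (1) If $\iota : A\to L$ is an assignment of generators for $\Gamma$, and $\sigma : A^*\to S$ and $\tau : A^*\to T$ are interpretations of $\Gamma$ both consistent with $\iota$, then there is an isomorphism $\theta : S\to T$ with $\tau=\theta\circ\sigma$. (2) If $\iota$ and $\iota'$ are equivalent assignments of generators, then every interpretation consistent with $\iota$ is consistent with $\iota'$. (3) Conversely, every interpretation $\sigma$ of $\Gamma$ is consistent with some assignment of generators, and any two assignments of generators with which $\sigma$ is consistent are equivalent.
   Context: Let $A$ be a finite alphabet, $\$ \notin A$ a new symbol, $A^\$ = A\cup\{\$\}$, and let $\delta : A^*\times A^*\to(A^\$\times A^\$)^*$ send a pair of words to the word of pairs obtained by padding the shorter word on the right with $\$$ and reading both letter by letter. A synchronous automaton is a finite automaton over $A^\$\times A^\$$; it recognises $R\subseteq A^*\times A^*$ if it accepts exactly $\delta(R)$. A pre-automatic structure $\Gamma$ consists of a finite alphabet $A$, a finite automaton recognising a language $L\subseteq A^*$, a synchronous automaton recognising $L_=\subseteq L\times L$, and for each $a\in A$ a synchronous automaton recognising $L_a\subseteq L\times L$. An interpretation of $\Gamma$ with respect to a semigroup $S$ is a morphism $\sigma:A^*\to S$ with $\sigma(L)=S$, such that for $u,v\in L$: $(u,v)\in L_=$ iff $\sigma(u)=\sigma(v)$, and for each $a\in A$, $(u,v)\in L_a$ iff $\sigma(ua)=\sigma(v)$. An assignment of generators for $\Gamma$ is a function $\iota:A\to L$ such that there exists an interpretation $\sigma$ of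 $\Gamma$ (with respect to some semigroup) with $\sigma(a)=\sigma(\iota(a))$ for all $a\in A$; such an interpretation is said to be consistent with $\iota$. Two assignments of generators $\iota,\iota'$ are equivalent if $(\iota(a),\iota'(a))\in L_=$ for every $a\in A$. *)

From mathcomp Require Import all_boot.
Set Implicit Arguments. Unset Strict Implicit. Unset Printing Implicit Defensive.

Record semigroup := Semigroup {
  sg_car :> Type;
  sg_op : sg_car -> sg_car -> sg_car;
  sg_assoc : associative sg_op }.

Definition word_morphism (A : Type) (S : semigroup) (sigma : seq A -> S) :=
  forall u v, sigma (u ++ v) = sg_op (sigma u) (sigma v).

Definition sg_iso (S T : semigroup) (theta : S -> T) :=
  bijective theta /\ forall x y, theta (sg_op x y) = sg_op (theta x) (theta y).

Record dfa (Sigma : finType) := Dfa {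
  dfa_state : finType;
  dfa_start : dfa_state;
  dfa_accept : {set dfa_state};
  dfa_trans : dfa_state -> Sigma -> dfa_state }.

Definition accepts (Sigma : finType) (M : dfa Sigma) (w : seq Sigma) : bool :=
  foldl (@dfa_trans _ M) (dfa_start M) w \in dfa_accept M.

(* A^$ = option A, with None playing the role of the padding symbol $. *)
Definition padded (A : finType) : finType := (option A * option A)%type.

(* delta : A^* x A^* -> (A^$ x A^$)^*, padding the shorter word with $. *)
Definition delta (A : finType) (u v : seq A) : seq (padded A) :=
  mkseq (fun i => (nth None (map Some u) i, nth None (map Some v) i))
        (maxn (size u) (size v)).

(* Since delta is injective, the recognised relation is
   {(u,v) | delta(u,v) accepted}. *)
Record preauto (A : finType) := PreAuto {
  pa_L : dfa A;
  pa_eq : dfa (padded A);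
  pa_gen : A -> dfa (padded A);
  pa_eq_sub : forall w, accepts pa_eq w ->
     exists u v, [/\ accepts pa_L u, accepts pa_L v & w = delta u v];
  pa_gen_sub : forall a w, accepts (pa_gen a) w ->
     exists u v, [/\ accepts pa_L u, accepts pa_L v & w = delta u v] }.

Section PreAuto.
Variables (A : finType) (G : preauto A).

Definition inL (u : seq A) : bool := accepts (pa_L G) u.
Definition Leq (u v : seq A) : bool := accepts (pa_eq G) (delta u v).
Definition Lgen (a : A) (u v : seq A) : bool := accepts (pa_gen G a) (delta u v).

Definition interpretation (S : semigroup) (sigma : seq A -> S) : Prop :=
  [/\ word_morphism sigma,
      (forall s : S, exists2 u, inL u & sigma u = s),
      (forall u v, inL u -> inL v -> (Leq u v <-> sigma u = sigma v)) &
      (forall a u v, inL u -> inL v ->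
         (Lgen a u v <-> sigma (rcons u a) = sigma v))].

Definition consistent (S : semigroup) (sigma : seq A -> S) (iota : A -> seq A) :=
  forall a, sigma [:: a] = sigma (iota a).

Definition assignment (iota : A -> seq A) : Prop :=
  (forall a, inL (iota a)) /\
  exists (S : semigroup) (sigma : seq A -> S),
    interpretation sigma /\ consistent sigma iota.

Definition equiv_assign (iota iota' : A -> seq A) : Prop :=
  forall a, Leq (iota a) (iota' a).

End PreAuto.

(** Two interpretations consistent with the same assignment of generators
   agree on which words they identify.  Indeed, reading a word letter by
   letter and replacing the current prefix by the representative in [L] that
   the automata [L_a] produce (starting from [iota a] for the first letter)
   yields one word of [L] representing the given word under both
   interpretations; on words of [L] both kernels are cut out by [L_=].
   Surjective morphisms from [A^*] with the same kernel differ by an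
   isomorphism, and the remaining statements are immediate from [L_=]. *)

From Stdlib Require Import ClassicalEpsilon.
From mathcomp Require Import all_boot.

Set Implicit Arguments.
Unset Strict Implicit.
Unset Printing Implicit Defensive.

Lemma word_morphism_rcons (A : Type) (S : semigroup) (sigma : seq A -> S) w a :
  word_morphism sigma -> sigma (rcons w a) = sg_op (sigma w) (sigma [:: a]).
Proof. by move=> sM; rewrite -cats1 sM. Qed.

Lemma sg_iso_factor (A : Type) (S T : semigroup)
    (sigma : seq A -> S) (tau : seq A -> T) :
  word_morphism sigma -> word_morphism tau ->
  (forall s, exists w, sigma w = s) -> (forall t, exists w, tau w = t) ->
  (forall w1 w2, sigma w1 = sigma w2 <-> tau w1 = tau w2) ->
  exists theta : S -> T, sg_iso theta /\ forall w, tau w = theta (sigma w).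
Proof.
move=> sM tM /choice[f fK] /choice[g gK] ker.
have tau_f w : tau w = tau (f (sigma w)) by apply/ker; rewrite fK.
exists (tau \o f); split=> //; split.
  exists (sigma \o g) => [s | t] /=; last by rewrite -tau_f gK.
  by rewrite -[RHS]fK; apply/ker; rewrite gK.
by move=> x y /=; rewrite -{1}(fK x) -{1}(fK y) -sM -tau_f tM.
Qed.

Section PreAutomatic.
Variables (A : finType) (G : preauto A).

Lemma interpretation_section (S : semigroup) (sigma : seq A -> S) :
  interpretation G sigma ->
  exists f : S -> seq A, forall s, inL G (f s) /\ sigma (f s) = s.
Proof.
case=> _ sL _ _; apply: (choice (fun s u => inL G u /\ sigma u = s)) => s.
by have [u] := sL s; exists u.
Qed.

Section TwoInterpretations.
Variables (iota : A -> seq A) (S T : semigroup).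
Variables (sigma : seq A -> S) (tau : seq A -> T).
Hypothesis iotaL : forall a, inL G (iota a).
Hypotheses (Isigma : interpretation G sigma) (Itau : interpretation G tau).
Hypotheses (sigma_iota : consistent sigma iota) (tau_iota : consistent tau iota).

Definition joint_rep (w : seq A) :=
  exists u, [/\ inL G u, sigma w = sigma u & tau w = tau u].

Lemma joint_rep_L u : inL G u -> joint_rep u.
Proof. by exists u. Qed.

Lemma joint_rep_rcons w a : joint_rep w -> joint_rep (rcons w a).
Proof.
case: Isigma Itau => [sM sL _ sgen] [tM _ _ tgen] [u [Lu su tu]].
have [v Lv sv] := sL (sigma (rcons u a)).
have /(tgen a u v Lu Lv) tv : Lgen G a u v by apply/sgen.
exists v; split=> //.
  by rewrite sv !word_morphism_rcons // su.
by rewrite -tv !word_morphism_rcons // tu.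
Qed.

Lemma joint_rep_nonempty w : w != [::] -> joint_rep w.
Proof.
elim/last_ind: w => [//|[|b w] a IHw _]; last exact/joint_rep_rcons/IHw.
by exists (iota a); split; [apply: iotaL | apply: sigma_iota | apply: tau_iota].
Qed.

Lemma joint_rep_ker w1 w2 : joint_rep w1 -> joint_rep w2 ->
  sigma w1 = sigma w2 -> tau w1 = tau w2.
Proof.
case: Isigma Itau => [_ _ sEq _] [_ _ tEq _] [u1 [L1 s1 t1]] [u2 [L2 s2 t2]] e.
by rewrite t1 t2; apply/(tEq _ _ L1 L2)/(sEq _ _ L1 L2); rewrite -s1 -s2.
Qed.

(* [sigma [::]] and [tau [::]] are identities, so appending [w] to a word [x]
   of [L] representing [tau [::]] changes neither image of [x]. *)
Lemma interpretation_ker_sub_nil w :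
  w != [::] -> sigma [::] = sigma w -> tau [::] = tau w.
Proof.
move=> nzw e; case: Isigma Itau => [sM _ _ _] [tM tL _ _].
have [x Lx tx] := tL (tau [::]).
have nzxw : x ++ w != [::] by case: x {Lx tx}.
have sxw : sigma (x ++ w) = sigma x by rewrite sM -e -sM cats0.
have := joint_rep_ker (joint_rep_nonempty nzxw) (joint_rep_L Lx) sxw.
by rewrite tM tx -tM /= => ->.
Qed.

Lemma interpretation_ker_sub w1 w2 : sigma w1 = sigma w2 -> tau w1 = tau w2.
Proof.
have [->|nz1] := eqVneq w1 [::]; have [->|nz2] := eqVneq w2 [::] => // e.
- exact: interpretation_ker_sub_nil.
- exact/esym/interpretation_ker_sub_nil.
- exact: joint_rep_ker (joint_rep_nonempty nz1) (joint_rep_nonempty nz2) e.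
Qed.

End TwoInterpretations.

Lemma interpretation_iso (iota : A -> seq A) (S T : semigroup)
    (sigma : seq A -> S) (tau : seq A -> T) :
  (forall a, inL G (iota a)) ->
  interpretation G sigma -> consistent sigma iota ->
  interpretation G tau -> consistent tau iota ->
  exists theta : S -> T, sg_iso theta /\ forall w, tau w = theta (sigma w).
Proof.
move=> iotaL Is cs It ct; have [[sM sL _ _] [tM tL _ _]] := (Is, It).
apply: sg_iso_factor => // [s | t | w1 w2].
- by have [u _ <-] := sL s; exists u.
- by have [u _ <-] := tL t; exists u.
by split; apply: interpretation_ker_sub.
Qed.

Lemma consistent_Leq (S : semigroup) (sigma : seq A -> S) (iota iota' : A -> seq A) :
  (forall a, inL G (iota a)) -> (forall a, inL G (iota' a)) ->
  interpretation G sigma -> consistent sigma iota ->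
  consistent sigma iota' <-> equiv_assign G iota iota'.
Proof.
move=> iotaL iota'L [_ _ sEq _] cs.
split=> [cs' a | eq a]; have := sEq _ _ (iotaL a) (iota'L a).
  by move->; rewrite -cs -cs'.
by rewrite cs => <-.
Qed.

Lemma interpretation_assignment (S : semigroup) (sigma : seq A -> S) :
  interpretation G sigma -> exists iota, assignment G iota /\ consistent sigma iota.
Proof.
move=> Is; have [f fK] := interpretation_section Is.
have cs : consistent sigma (fun a => f (sigma [:: a])) by move=> a; rewrite (proj2 (fK _)).
exists (fun a => f (sigma [:: a])); split=> //.
by split; [move=> a; exact: (proj1 (fK _)) | exists S, sigma].
Qed.

End PreAutomatic.

Theorem proposition2p4 (A : finType) (G : preauto A) :
  (* (1) *)
  (forall (iota : A -> seq A) (S T : semigroup)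
          (sigma : seq A -> S) (tau : seq A -> T),
      assignment G iota ->
      interpretation G sigma -> consistent sigma iota ->
      interpretation G tau -> consistent tau iota ->
      exists theta : S -> T, sg_iso theta /\ forall w, tau w = theta (sigma w))
  /\
  (* (2) *)
  (forall iota iota' : A -> seq A,
      assignment G iota -> assignment G iota' -> equiv_assign G iota iota' ->
      forall (S : semigroup) (sigma : seq A -> S),
        interpretation G sigma -> consistent sigma iota -> consistent sigma iota')
  /\
  (* (3) *)
  (forall (S : semigroup) (sigma : seq A -> S),
      interpretation G sigma ->
      (exists iota, assignment G iota /\ consistent sigma iota) /\
      (forall iota iota', assignment G iota -> assignment G iota' ->
         consistent sigma iota -> consistent sigma iota' ->
         equiv_assign G iota iota')).
Proof.
split; first by move=> iota S T sigma tau [iotaL _]; apply: interpretation_iso.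
split.
  move=> iota iota' [iotaL _] [iota'L _] eq S sigma Is cs.
  by rewrite (consistent_Leq iotaL iota'L Is cs).
move=> S sigma Is; split; first exact: interpretation_assignment.
move=> iota iota' [iotaL _] [iota'L _] cs.
by rewrite (consistent_Leq iotaL iota'L Is cs).
Qed.
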